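(* Let $A, B, C, F \in \mathbb{R}^{n\times n}$ and consider the matrix equation $$AX + B\lvert CX\rvert = F$$ in the unknown $X \in \mathbb{R}^{n\times n}$. This equation has exactly one solution if any one of the following conditions is satisfied: (i) $C$ is invertible and $\sigma_{\max}(\lvert B\rvert) < \sigma_{\min}(AC^{-1})$; (ii) $C$ is invertible and $\sigma_{\max}(B) < \sigma_{\min}(AC^{-1})$; (iii) $A$ is invertible and $\rho\left(\lvert CA^{-1}\rvert\cdot\lvert B\rvert\right) < 1$; (iv) $A$ is invertible and $\sigma_{\max}(CA^{-1}B) < 1$.
   Context: $\lvert M\rvert$ is the entrywise absolute value of a matrix $M$; $\sigma_{\max}(\cdot)$ and $\sigma_{\min}(\cdot)$ denote the largest and smallest singular values of a real square matrix; $\rho(\cdot)$ is the spectral radius. *)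

From mathcomp Require Import all_boot all_order all_algebra.
From mathcomp Require Import reals.
From mathcomp.real_closed Require Export complex.
Set Implicit Arguments. Unset Strict Implicit. Unset Printing Implicit Defensive.
Import Order.TTheory GRing.Theory Num.Theory.
Local Open Scope ring_scope.

Section Defs.
Variable R : realType.

Definition absmx (m n : nat) (M : 'M[R]_(m, n)) : 'M[R]_(m, n) :=
  map_mx (fun x => `|x|) M.

Definition cplx_mx (n : nat) (M : 'M[R]_n) : 'M[R[i]]_n :=
  map_mx (fun x : R => Complex x 0) M.

(* the complex eigenvalues of M, listed with algebraic multiplicity:
   the roots of its characteristic polynomial over C *)
Definition eigs (n : nat) (M : 'M[R]_n) : seq R[i] :=
  sval (closed_field_poly_normal (char_poly (cplx_mx M))).

Definition spectral_radius (n : nat) (M : 'M[R]_n) : R :=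
  \big[Num.max/0]_(z <- eigs M) Num.sqrt (complex.Re z ^+ 2 + complex.Im z ^+ 2).

(* singular values of M = square roots of the eigenvalues of M^T M
   (which are real and nonnegative) *)
Definition gram_eigs (n : nat) (M : 'M[R]_n) : seq R :=
  [seq complex.Re z | z <- eigs (M^T *m M)].

Definition sigma_max (n : nat) (M : 'M[R]_n) : R :=
  Num.sqrt (\big[Num.max/0]_(x <- gram_eigs M) x).

Definition sigma_min (n : nat) (M : 'M[R]_n) : R :=
  Num.sqrt (\big[Num.min/head 0 (gram_eigs M)]_(x <- gram_eigs M) x).

End Defs.

From HB Require Import structures.
From mathcomp Require Import all_boot all_order all_algebra.
From mathcomp Require Import reals.
From mathcomp.real_closed Require Import complex.
From mathcomp Require Import lra ring spectral sesquilinear.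
From mathcomp Require Import interval_inference classical_sets functions.
From mathcomp Require Import topology normedtype sequences.
Import Order.TTheory GRing.Theory Num.Theory.
Local Open Scope ring_scope.
Set Implicit Arguments. Unset Strict Implicit. Unset Printing Implicit Defensive.

(* Put W = C X.  When A is invertible the equation becomes the fixed-point
   problem W = K - Q |W| with Q = C A^-1 B; when C and M = A C^-1 are
   invertible, so is A = M C, and Q = M^-1 B.  Since | |U| - |V| | <= |U - V|
   entrywise, the k-th iterate of W |-> K - Q |W| shrinks differences
   entrywise by |Q|^k and column-wise Euclidean norms by ||Q||^k.  Under (iii)
   |Q| <= P := |C A^-1| |B| with rho(P) < 1, and P^k -> 0 since P is similar
   (Schur triangularisation followed by a diagonal rescaling) to a matrix
   whose absolute row sums are below (1 + rho(P)) / 2.  Under (i), (ii), (iv)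
   the Rayleigh bounds sigma_min(M) |u| <= |M u| and |B v| <= sigma_max(B) |v|
   (or sigma_max(|B|) |v|, as |B v| <= |B| |v|) give ||Q|| < 1.  In every case
   some iterate is a contraction for the max-entry norm, and Banach's fixed
   point theorem applies. *)

(** * Iterated contractions on matrices *)

(* Needed to apply [banach_fixed_point], stated for complete normed modules. *)
HB.instance Definition _ (R : realType) m p := Complete.on 'M[R]_(m, p).

Lemma iter_contraction_unique_fixpoint (R : realType) m p
    (G : 'M[R]_(m, p) -> 'M[R]_(m, p)) k q :
  0 <= q -> q < 1 ->
  (forall U V, `|iter k G U - iter k G V| <= q * `|U - V|) ->
  exists! U, G U = U.
Proof.
move=> q_ge0 q_lt1 Gk.
pose Gk' := @mkfun_fun _ _ setT setT (iter k G) (fun _ _ => I).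
have Gk_ctr : is_contraction Gk' by exists (NngNum q_ge0); split=> //= -[U V] _; exact: Gk.
have [U _ GkU] := banach_fixed_point Gk_ctr closedT (ex_intro _ 0 I).
have GkU_uniq V : iter k G V = V -> V = U.
  move=> GkV; apply/eqP; rewrite -subr_eq0 -normr_eq0; apply/eqP/le_anti.
  rewrite normr_ge0 andbT.
  have := Gk V U; rewrite GkV -GkU => VU_le.
  have : `|V - U| * (1 - q) <= 0 by rewrite mulrBr mulr1 subr_le0 mulrC.
  by rewrite pmulr_lle0 // subr_gt0.
exists U; split; first by apply: GkU_uniq; rewrite -iterSr iterS -GkU.
move=> V GV; apply/esym/GkU_uniq.
by elim: k {Gk Gk' Gk_ctr GkU GkU_uniq} => //= k ->.
Qed.

Section MxNorm.
Variable R : realType.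

Lemma ler_mx_norm_entry m p (M : 'M[R]_(m, p)) i j : `|M i j| <= `|M|.
Proof.
rewrite -[`|M|]/(mx_norm M) mx_normrE.
exact: (le_bigmax _ (fun ij => `|M ij.1 ij.2|) (i, j)).
Qed.

Lemma mx_norm_le m p (M : 'M[R]_(m, p)) c :
  0 <= c -> (forall i j, `|M i j| <= c) -> `|M| <= c.
Proof.
by move=> c_ge0 Mc; rewrite -[`|M|]/(mx_norm M) mx_normrE; apply: bigmax_le => // -[i j] _.
Qed.

Lemma mx_norm_mul_le m n p (M : 'M[R]_(m, n)) (N : 'M[R]_(n, p)) :
  `|M *m N| <= n%:R * `|M| * `|N|.
Proof.
apply: mx_norm_le => [|i j]; first by rewrite !mulr_ge0.
rewrite mxE; apply: le_trans (ler_norm_sum _ _ _) _.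
rewrite -mulrA mulr_natl -[X in _ *+ X]card_ord -sumr_const.
apply: ler_sum => l _; rewrite normrM.
by apply: ler_pM; rewrite ?normr_ge0 ?ler_mx_norm_entry.
Qed.

End MxNorm.

Lemma expr_lt1_small (R : realType) (a eps : R) :
  0 <= a -> a < 1 -> 0 < eps -> exists k, a ^+ k <= eps.
Proof.
move=> a_ge0 a_lt1 eps_gt0.
have /cvg_expr /(@cvgrPdist_lt R R^o) /(_ eps eps_gt0) [N _ aN] : `|a| < 1.
  by rewrite ger0_norm.
exists N; have := aN N (leqnn N).
by rewrite sub0r normrN ger0_norm ?exprn_ge0 // => /ltW.
Qed.

Section EntrywiseOrder.
Variable R : realType.

Definition lemx m p (M N : 'M[R]_(m, p)) := forall i j, M i j <= N i j.

Lemma lemx_trans m p (L M N : 'M[R]_(m, p)) : lemx L M -> lemx M N -> lemx L N.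
Proof. by move=> LM MN i j; apply: le_trans (LM i j) (MN i j). Qed.

Lemma lemx_mul2l m n p (L : 'M[R]_(m, n)) (M N : 'M[R]_(n, p)) :
  (forall i j, 0 <= L i j) -> lemx M N -> lemx (L *m M) (L *m N).
Proof. by move=> L_ge0 MN i j; rewrite !mxE; apply: ler_sum => k _; apply: ler_wpM2l. Qed.

Lemma lemx_mul2r m n p (L M : 'M[R]_(m, n)) (N : 'M[R]_(n, p)) :
  (forall i j, 0 <= N i j) -> lemx L M -> lemx (L *m N) (M *m N).
Proof. by move=> N_ge0 LM i j; rewrite !mxE; apply: ler_sum => k _; apply: ler_wpM2r. Qed.

Lemma absmx_ge0 m p (M : 'M[R]_(m, p)) i j : 0 <= absmx M i j.
Proof. by rewrite mxE. Qed.

Lemma norm_absmx m p (M : 'M[R]_(m, p)) : `|absmx M| = `|M|.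
Proof.
apply/le_anti/andP; split; apply: mx_norm_le => // i j.
  by rewrite mxE normr_id ler_mx_norm_entry.
by have := ler_mx_norm_entry (absmx M) i j; rewrite mxE normr_id.
Qed.

Lemma absmx_mul_le m n p (M : 'M[R]_(m, n)) (N : 'M[R]_(n, p)) :
  lemx (absmx (M *m N)) (absmx M *m absmx N).
Proof.
move=> i j; rewrite !mxE; apply: le_trans (ler_norm_sum _ _ _) _.
by apply: ler_sum => k _; rewrite !mxE normrM.
Qed.

Lemma absmx_dist_le m p (M N : 'M[R]_(m, p)) :
  lemx (absmx (absmx M - absmx N)) (absmx (M - N)).
Proof. by move=> i j; rewrite !mxE ler_dist_dist. Qed.

Lemma mx_norm_le_lemx m p (M N : 'M[R]_(m, p)) : lemx (absmx M) N -> `|M| <= `|N|.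
Proof.
move=> MN; apply: mx_norm_le => // i j.
have := MN i j; rewrite mxE => /le_trans; apply.
exact: le_trans (ler_norm _) (ler_mx_norm_entry N i j).
Qed.

End EntrywiseOrder.

(** * The fixed-point map W |-> K - Q |W| *)

Section AbsAffineMap.
Variables (R : realType) (n p : nat).
Variables (Q : 'M[R]_n) (K : 'M[R]_(n, p)).

Definition absmap (W : 'M[R]_(n, p)) := K - Q *m absmx W.

Lemma absmap_sub U V : absmap U - absmap V = Q *m (absmx V - absmx U).
Proof. by rewrite /absmap mulmxBr opprB addrC addrA subrK addrC. Qed.

Lemma absmap_iter_dist_le (P : 'M[R]_n) k U V :
  lemx (absmx Q) P ->
  lemx (absmx (iter k absmap U - iter k absmap V)) (P ^+ k *m absmx (U - V)).
Proof.
move=> QP; have P_ge0 i j : 0 <= P i j by apply: le_trans (QP i j); rewrite mxE.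
elim: k => [|k IHk] /=; first by rewrite expr0 mul1mx => i j.
rewrite absmap_sub exprS -mulmxE -mulmxA.
apply: lemx_trans (absmx_mul_le _ _) _.
apply: lemx_trans (lemx_mul2r (@absmx_ge0 _ _ _ _) QP) _.
apply: lemx_mul2l => //; apply: lemx_trans (absmx_dist_le _ _) _.
by move=> i j; have := IHk i j; rewrite !mxE distrC.
Qed.

Lemma absmap_unique_fixpoint_lemx (P : 'M[R]_n) :
  lemx (absmx Q) P -> (forall eps, 0 < eps -> exists k, `|P ^+ k| <= eps) ->
  exists! W, absmap W = W.
Proof.
move=> QP Pk_small.
have [k Pk] : exists k, `|P ^+ k| <= n.+1%:R^-1 by apply: Pk_small; rewrite invr_gt0.
apply: (iter_contraction_unique_fixpoint (k := k) (q := n%:R / n.+1%:R)).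
- by rewrite divr_ge0.
- by rewrite ltr_pdivrMr // mul1r ltr_nat.
move=> U V; apply: le_trans (mx_norm_le_lemx (absmap_iter_dist_le k U V QP)) _.
apply: le_trans (mx_norm_mul_le _ _) _; rewrite norm_absmx.
by apply: ler_wpM2r => //; rewrite ler_wpM2l.
Qed.

End AbsAffineMap.

Section SquaredEuclideanNorm.
Variables (R : realType) (n : nat).
Implicit Types u v : 'cV[R]_n.

Definition sqnorm v := \sum_i v i 0 ^+ 2.

Lemma sqnorm_tr_mul v : sqnorm v = (v^T *m v) 0 0.
Proof. by rewrite mxE; apply: eq_bigr => i _; rewrite mxE expr2. Qed.

Lemma sqnorm_ge0 v : 0 <= sqnorm v.
Proof. by apply: sumr_ge0 => i _; exact: sqr_ge0. Qed.

Lemma ler_sqr_sqnorm v i : v i 0 ^+ 2 <= sqnorm v.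
Proof. by rewrite /sqnorm (bigD1 i) //= lerDl; apply: sumr_ge0 => l _; exact: sqr_ge0. Qed.

Lemma sqnorm_gt0 v : v != 0 -> 0 < sqnorm v.
Proof.
move=> v_neq0; have [i vi_neq0] : exists i, v i 0 != 0.
  apply/existsP; apply: contraR v_neq0 => /existsPn v0; apply/eqP/colP => i.
  by rewrite mxE; apply/eqP/negPn.
by apply: lt_le_trans (ler_sqr_sqnorm v i); rewrite lt0r sqr_ge0 sqrf_eq0 vi_neq0.
Qed.

Lemma sqnorm_col_le_norm p (M : 'M[R]_(n, p)) j : sqnorm (col j M) <= n%:R * `|M| ^+ 2.
Proof.
rewrite /sqnorm mulr_natl -[X in _ *+ X]card_ord -sumr_const; apply: ler_sum => i _.
by rewrite mxE -real_normK ?num_real // lerXn2r ?nnegrE ?ler_mx_norm_entry.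
Qed.

Lemma sqnorm_le u v : (forall i, `|u i 0| <= `|v i 0|) -> sqnorm u <= sqnorm v.
Proof.
move=> uv; apply: ler_sum => i _.
rewrite -[u i 0 ^+ 2]real_normK ?num_real // -[v i 0 ^+ 2]real_normK ?num_real //.
by rewrite lerXn2r ?nnegrE.
Qed.

Lemma sqnorm_absmx v : sqnorm (absmx v) = sqnorm v.
Proof. by apply: eq_bigr => i _; rewrite mxE real_normK ?num_real. Qed.

Lemma sqnorm_mul_le_absmx (B : 'M[R]_n) v : sqnorm (B *m v) <= sqnorm (absmx B *m absmx v).
Proof.
apply: sqnorm_le => i; have := absmx_mul_le B v i 0; rewrite mxE => /le_trans; apply.
exact: ler_norm.
Qed.

End SquaredEuclideanNorm.

Section AbsAffineMapEuclid.
Variables (R : realType) (n p : nat) (Q : 'M[R]_n) (K : 'M[R]_(n, p)) (a : R).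
Hypotheses (a_ge0 : 0 <= a) (Q_sqnorm : forall v, sqnorm (Q *m v) <= a * sqnorm v).

Lemma absmap_iter_col_sqnorm_le k U V j :
  sqnorm (col j (iter k (absmap Q K) U - iter k (absmap Q K) V))
    <= a ^+ k * sqnorm (col j (U - V)).
Proof.
elim: k => [|k IHk] /=; first by rewrite mul1r.
rewrite absmap_sub colE -mulmxA -colE exprS -mulrA.
apply: le_trans (Q_sqnorm _) _; rewrite ler_wpM2l //.
apply: le_trans IHk; apply: sqnorm_le => i.
by rewrite !mxE distrC ler_dist_dist.
Qed.

Lemma absmap_unique_fixpoint_sqnorm : a < 1 -> exists! W, absmap Q K W = W.
Proof.
move=> a_lt1.
(* Then each entry of the k-th difference has square <= a^k n |U - V|^2 <= |U - V|^2 / 4. *)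
have [k ak] : exists k, a ^+ k <= (4 * (n%:R + 1))^-1.
  by apply: expr_lt1_small => //; rewrite invr_gt0 mulr_gt0 ?ltr_wpDl.
apply: (iter_contraction_unique_fixpoint (k := k) (q := 2^-1)) => //.
  by rewrite invf_lt1 // ltr1n.
move=> U V; apply: mx_norm_le => [|i j]; first by rewrite mulr_ge0 ?invr_ge0.
rewrite -(@ler_pXn2r _ 2) ?nnegrE ?mulr_ge0 // real_normK ?num_real //.
have := le_trans (ler_sqr_sqnorm _ i) (absmap_iter_col_sqnorm_le k U V j).
rewrite mxE => /le_trans; apply.
apply: le_trans (ler_wpM2l (exprn_ge0 _ a_ge0) (sqnorm_col_le_norm _ _)) _.
rewrite exprMn exprVn [X in _ <= X]mulrC ler_pdivlMr ?exprn_gt0 //.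
have : a ^+ k * (4 * (n%:R + 1)) <= 1 by rewrite -ler_pdivlMr ?mul1r ?mulr_gt0 ?ltr_wpDl.
have : 0 <= a ^+ k by rewrite exprn_ge0.
have : 0 <= `|U - V| ^+ 2 by rewrite sqr_ge0.
have : (0 : R) <= n%:R by [].
nra.
Qed.

End AbsAffineMapEuclid.

(** * Singular values *)

Section HermitianForm.
Variables (C : numClosedFieldType) (n : nat).
Local Open Scope sesquilinear_scope.

Lemma hermitian_form_diag (A : 'M[C]_n) : A \is hermsymmx ->
  exists2 d : 'I_n -> C, (forall i, d i \is Num.real /\ root (char_poly A) (d i)) &
  exists P : 'M[C]_n, forall u : 'rV[C]_n,
    (u *m A *m u^t*) 0 0 = \sum_i d i * `|(u *m P) 0 i| ^+ 2 /\
    (u *m u^t*) 0 0 = \sum_i `|(u *m P) 0 i| ^+ 2.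
Proof.
move=> A_herm; set P := spectralmx A; set d := spectral_diag A.
have P_unitary : P \is unitarymx := spectral_unitarymx A.
have P_unit : P \in unitmx := spectral_unit A.
have invP : invmx P = P^t* := invmx_unitary P_unitary.
have PA : A = P^t* *m diag_mx d *m P.
  by rewrite -invP; apply/orthomx_spectralP/hermitian_normalmx.
exists (d 0).
  move=> i; split; first by have /mxOverP := hermitian_spectral_diag_real A_herm; apply.
  rewrite -eigenvalue_root_char; apply/eigenvalueP; exists (row i P).
    rewrite -row_mul PA !mulmxA -invP mulmxV // mul1mx row_mul.
    by rewrite row_diag_mx -scalemxAl -rowE.
  rewrite rowE mulmx_free_eq0 ?row_free_unit //.
  by apply/eqP => /matrixP /(_ 0 i) /eqP; rewrite !mxE !eqxx oner_eq0.
exists (P^t*) => u.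
have Pu : P *m u^t* = (u *m P^t*)^t* by rewrite trmx_mul map_mxM trmxCK.
split.
  rewrite PA -!mulmxA Pu !mulmxA mul_mx_diag mxE.
  by apply: eq_bigr => i _; rewrite !mxE normCK; ring.
have PtP : P^t* *m P = 1%:M by rewrite -invP mulVmx.
rewrite -{1}[u]mulmx1 -PtP mulmxA -(mulmxA (u *m P^t*)) Pu mxE.
by apply: eq_bigr => i _; rewrite !mxE normCK.
Qed.

End HermitianForm.

Section GramEigenvalues.
Variables (R : realType) (n : nat).
Local Open Scope complex_scope.
Local Open Scope sesquilinear_scope.

Lemma mem_eigs (M : 'M[R]_n) z : root (char_poly (cplx_mx M)) z -> z \in eigs M.
Proof.
rewrite /eigs; case: closed_field_poly_normal => /= rs ->.
by rewrite (monicP (char_poly_monic _)) scale1r root_prod_XsubC.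
Qed.

Lemma cplx_mx_hermitian (M : 'M[R]_n) : M^T = M -> cplx_mx M \is hermsymmx.
Proof.
move=> M_sym; rewrite is_hermitianmxE expr0 scale1r; apply/eqP/matrixP => i j.
rewrite !mxE conj_Creal; last by apply/complex_realP; eexists.
by rewrite -[in LHS]M_sym mxE.
Qed.

(* [c] lists eigenvalues of M^T M and [r] the squared moduli of the
   coordinates of [v] in an orthonormal eigenbasis. *)
Lemma sqnorm_mul_gram (M : 'M[R]_n) (v : 'cV[R]_n) :
  exists c r : 'I_n -> R, [/\ forall i, c i \in gram_eigs M, forall i, 0 <= r i,
    sqnorm v = \sum_i r i & sqnorm (M *m v) = \sum_i c i * r i].
Proof.
have [|d d_spec [P Pform]] := hermitian_form_diag (cplx_mx_hermitian (M := M^T *m M) _).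
  by rewrite trmx_mul trmxK.
set vC := map_mx (real_complex R) v.
have vC_adj : vC^T^t* = vC.
  by apply/matrixP => i j; rewrite !mxE conj_Creal //; apply/complex_realP; eexists.
have [Sv vv] := Pform vC^T; rewrite vC_adj in Sv vv.
pose w i : R[i] := (vC^T *m P) 0 i.
exists (fun i => complex.Re (d i)), (fun i => complex.Re (w i) ^+ 2 + complex.Im (w i) ^+ 2).
split.
- by move=> i; apply: map_f; apply: mem_eigs; case: (d_spec i).
- by move=> i; rewrite addr_ge0 ?sqr_ge0.
- apply: complexI; rewrite [RHS]rmorph_sum /=; under eq_bigr do rewrite add_Re2_Im2.
  by rewrite -vv sqnorm_tr_mul /vC map_trmx -map_mxM [RHS]mxE.
- have dE i : (complex.Re (d i))%:C = d i by rewrite RRe_real //; case: (d_spec i).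
  apply: complexI; rewrite [RHS]rmorph_sum /=.
  under eq_bigr do rewrite rmorphM /= dE add_Re2_Im2.
  rewrite -Sv sqnorm_tr_mul trmx_mul /vC map_trmx.
  by rewrite [cplx_mx _]/cplx_mx -!map_mxM !mulmxA [RHS]mxE.
Qed.

End GramEigenvalues.

Section SingularValues.
Variables (R : realType) (n : nat).
Implicit Types (M : 'M[R]_n) (v : 'cV[R]_n).

Lemma sqnorm_mul_le_sigma_max M v : sqnorm (M *m v) <= sigma_max M ^+ 2 * sqnorm v.
Proof.
have [c [r [c_gram r_ge0 -> ->]]] := sqnorm_mul_gram M v.
rewrite sqr_sqrtr ?bigmax_ge_id // mulr_sumr; apply: ler_sum => i _.
by rewrite ler_wpM2r // le_bigmax_seq.
Qed.

Lemma sqnorm_mul_ge_sigma_min M v : sigma_min M ^+ 2 * sqnorm v <= sqnorm (M *m v).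
Proof.
have [c [r [c_gram r_ge0 -> Mv]]] := sqnorm_mul_gram M v.
rewrite /sigma_min; set m := \big[Num.min/_]_(x <- _) x.
(* [m] is in fact nonnegative, but [Num.sqrt] is 0 on negatives anyway. *)
have [m_ge0|m_lt0] := lerP 0 m; last by rewrite ltr0_sqrtr // expr0n mul0r sqnorm_ge0.
rewrite Mv sqr_sqrtr // mulr_sumr; apply: ler_sum => i _.
by rewrite ler_wpM2r // ge_bigmin_seq.
Qed.

Lemma sqnorm_mul_le_sigma_max_absmx M v :
  sqnorm (M *m v) <= sigma_max (absmx M) ^+ 2 * sqnorm v.
Proof.
apply: le_trans (sqnorm_mul_le_absmx M v) _; rewrite -(sqnorm_absmx v).
exact: sqnorm_mul_le_sigma_max.
Qed.

Lemma sigma_min_gt0_unitmx M : 0 < sigma_min M -> M \in unitmx.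
Proof.
move=> sigma_gt0; rewrite unitmxE unitfE -det_tr; apply/negP => /det0P [u u_neq0 uM].
have Mu : M *m u^T = 0 by rewrite -[M]trmxK -trmx_mul uM trmx0.
have := sqnorm_mul_ge_sigma_min M u^T; rewrite Mu [sqnorm 0]sqnorm_tr_mul mulmx0 mxE.
by rewrite leNgt mulr_gt0 ?exprn_gt0 ?sqnorm_gt0 ?trmx_eq0.
Qed.

End SingularValues.

(** * Spectral radius and powers *)

Section RowSums.
Variables (C : numFieldType) (n : nat).
Implicit Types (M N : 'M[C]_n) (a b : C).

Definition rowsums_le M b := forall i, \sum_j `|M i j| <= b.

Lemma rowsums_le_entry M b i j : rowsums_le M b -> `|M i j| <= b.
Proof.
move=> Mb; apply: le_trans (Mb i).
by rewrite (bigD1 j) //= lerDl sumr_ge0.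
Qed.

Lemma rowsums_le_total M : rowsums_le M (\sum_i \sum_j `|M i j|).
Proof.
move=> i; rewrite [leRHS](bigD1 i) //= lerDl.
by apply: sumr_ge0 => l _; exact: sumr_ge0.
Qed.

Lemma rowsums_le_mul M N a b :
  0 <= b -> rowsums_le M a -> rowsums_le N b -> rowsums_le (M *m N) (a * b).
Proof.
move=> b_ge0 Ma Nb i.
apply: le_trans (_ : \sum_j \sum_l `|M i l| * `|N l j| <= _).
  apply: ler_sum => j _; rewrite mxE; apply: le_trans (ler_norm_sum _ _ _) _.
  by under eq_bigr do rewrite normrM.
rewrite exchange_big /=; apply: le_trans (_ : \sum_l `|M i l| * b <= _).
  by apply: ler_sum => l _; rewrite -mulr_sumr ler_wpM2l.
by rewrite -mulr_suml ler_wpM2r.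
Qed.

Lemma rowsums_le_pow M a k : 0 <= a -> rowsums_le M a -> rowsums_le (M ^+ k) (a ^+ k).
Proof.
move=> a_ge0 Ma; elim: k => [|k IHk].
  move=> i; rewrite !expr0 (bigD1 i) //= big1 => [|j /negbTE ji].
    by rewrite mxE eqxx normr1 addr0.
  by rewrite mxE eq_sym ji normr0.
by rewrite !exprS -mulmxE; apply: rowsums_le_mul; rewrite ?exprn_ge0.
Qed.

End RowSums.

Section RowSumsSimilar.
Variables (C : numFieldType) (n : nat).
Implicit Types (M S : 'M[C]_n).

Lemma conj_mx_pow M S (S' : 'M[C]_n) k : S' *m S = 1%:M ->
  M ^+ k = S' *m (S *m M *m S') ^+ k *m S.
Proof.
move=> S'S; elim: k => [|k IHk]; first by rewrite !expr0 mulmx1 S'S.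
by rewrite !exprS -!mulmxE IHk !mulmxA S'S mul1mx.
Qed.

Lemma rowsums_le_conj_pow M S (S' : 'M[C]_n) r k i j :
  S' *m S = 1%:M -> 0 <= r -> rowsums_le (S *m M *m S') r ->
  `|(M ^+ k) i j| <= (\sum_a \sum_b `|S' a b|) * r ^+ k * (\sum_a \sum_b `|S a b|).
Proof.
move=> S'S r_ge0 Mr; rewrite (conj_mx_pow M k S'S).
apply: rowsums_le_entry; apply: rowsums_le_mul; last exact: rowsums_le_total.
  by apply: sumr_ge0 => a _; exact: sumr_ge0.
apply: rowsums_le_mul; [exact: exprn_ge0 | exact: rowsums_le_total | exact: rowsums_le_pow].
Qed.

(* Conjugating by diag(d^i) multiplies the entry (i, j) by d^(i - j), so the
   strictly lower part of a lower triangular matrix shrinks by a factor d. *)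
Lemma trig_diag_scaling (T : 'M[C]_n) r e : is_trig_mx T ->
  (forall i, `|T i i| <= r) -> 0 < e ->
  exists S S', S' *m S = 1%:M /\ rowsums_le (S *m T *m S') (r + e).
Proof.
move=> T_trig Tr e_gt0; set K := \sum_i \sum_j `|T i j|.
have K_ge0 : 0 <= K by apply: sumr_ge0 => i _; exact: sumr_ge0.
pose d := e / (K + e).
have d_gt0 : 0 < d by rewrite divr_gt0 // ltr_wpDl.
have d_le1 : d <= 1 by rewrite ler_pdivrMr ?ltr_wpDl // mul1r lerDr.
have dK : d * K <= e.
  by rewrite mulrC mulrA ler_pdivrMr ?ltr_wpDl // [K * e]mulrC ler_wpM2l ?lerDl ?ltW.
exists (diag_mx (\row_i d ^+ i)), (diag_mx (\row_i d^-1 ^+ i)); split.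
  apply/matrixP => i j; rewrite mul_diag_mx !mxE.
  by rewrite exprVn mulrnAr mulVf // expf_neq0 // gt_eqF.
move=> i; set T' := _ *m _ *m _.
have T'E j : T' i j = d ^+ i * d^-1 ^+ j * T i j.
  by rewrite /T' mul_mx_diag mul_diag_mx !mxE mulrAC.
have T'_off j : j != i -> `|T' i j| <= d * `|T i j|.
  move=> j_neq_i; rewrite T'E normrM ger0_norm; last first.
    by rewrite mulr_ge0 ?exprn_ge0 ?invr_ge0 ?ltW.
  have [j_lt_i|i_le_j] := ltnP j i.
    rewrite exprVn -expfB // ler_wpM2r // -[leRHS]expr1.
    by apply: ler_wiXn2l; rewrite ?subn_gt0 // ltW.
  have i_lt_j : (i < j)%N by rewrite ltn_neqAle eq_sym j_neq_i.
  by move/is_trig_mxP: T_trig => /(_ i j i_lt_j) ->; rewrite normr0 !mulr0.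
rewrite (bigD1 i) //= T'E exprVn mulfV ?expf_neq0 ?gt_eqF // mul1r lerD //.
apply: le_trans (_ : \sum_(j | j != i) d * `|T i j| <= _); first exact: ler_sum.
rewrite -mulr_sumr; apply: le_trans _ dK; apply: ler_wpM2l; first exact: ltW.
apply: le_trans (rowsums_le_total T i).
by rewrite [leRHS](bigD1 i) //= lerDr.
Qed.

End RowSumsSimilar.

Lemma trig_mx_diag_root (F : fieldType) n (T : 'M[F]_n) i :
  is_trig_mx T -> root (char_poly T) (T i i).
Proof.
move=> T_trig; rewrite char_poly_trig // /root horner_prod (bigD1 i) //=.
by rewrite hornerXsubC subrr mul0r.
Qed.

Section SpectralRadius.
Variable R : realType.
Local Open Scope complex_scope.

Lemma cplx_mxE n (M : 'M[R]_n) : cplx_mx M = map_mx (real_complex R) M.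
Proof. by []. Qed.

Lemma normr_real_complex (x : R) : `|x%:C| = `|x|%:C.
Proof. by rewrite normc_def /= expr0n addr0 sqrtr_sqr. Qed.

Lemma spectral_radius_ge0 n (P : 'M[R]_n) : 0 <= spectral_radius P.
Proof. exact: bigmax_ge_id. Qed.

Lemma norm_le_spectral_radius n (P : 'M[R]_n) z :
  root (char_poly (cplx_mx P)) z -> `|z| <= (spectral_radius P)%:C.
Proof.
move=> /mem_eigs z_eig; rewrite normc_def lecR.
by apply: le_bigmax_seq z_eig _.
Qed.

Lemma spectral_radius_similar_rowsums n (P : 'M[R]_n) e : 0 < e ->
  exists S S' : 'M[R[i]]_n, S' *m S = 1%:M /\
    rowsums_le (S *m cplx_mx P *m S') (spectral_radius P + e)%:C.
Proof.
case: n P => [|n] P e_gt0; first by exists 1%:M, 1%:M; split=> [|[]]; rewrite ?mulmx1.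
have [U U_unitary U_trig] := Schur (cplx_mx P) (ltn0Sn n).
have U_unit := unitarymx_unit U_unitary.
set T := conjmx U (cplx_mx P); have T_trig : is_trig_mx T := U_trig.
have T_diag i : `|T i i| <= (spectral_radius P)%:C.
  apply: norm_le_spectral_radius; rewrite -eigenvalue_root_char.
  apply: (eigenvalue_conjmx (stablemx_unit _ U_unit)); first by rewrite row_free_unit.
  by rewrite [_ \in _]eigenvalue_root_char trig_mx_diag_root.
have [|S [S' [S'S TS]]] := trig_diag_scaling T_trig T_diag (e := e%:C); first by rewrite ltcR.
exists (S *m U), (invmx U *m S'); split.
  by rewrite !mulmxA -(mulmxA _ S') S'S mulmx1 mulVmx.
by rewrite rmorphD /= !mulmxA -(mulmxA S) -(mulmxA S) -conjumx.
Qed.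

Lemma spectral_radius_lt1_pow_small n (P : 'M[R]_n) eps :
  spectral_radius P < 1 -> 0 < eps -> exists k, `|P ^+ k| <= eps.
Proof.
move=> rho_lt1 eps_gt0; set rho := spectral_radius P in rho_lt1.
have rho_ge0 : 0 <= rho := spectral_radius_ge0 P.
have [|S [S' [S'S SPS]]] := @spectral_radius_similar_rowsums _ P ((1 - rho) / 2).
  by rewrite divr_gt0 ?subr_gt0.
set b := (\sum_a \sum_b `|S' a b|) * (\sum_a \sum_b `|S a b|).
have b_ge0 : 0 <= b by rewrite mulr_ge0 ?sumr_ge0 // => a _; rewrite sumr_ge0.
have bE : b = (complex.Re b)%:C by rewrite RRe_real ?ger0_real.
have Reb_ge0 : 0 <= complex.Re b by rewrite -ler0c -bE.
have [k rk] : exists k, (rho + (1 - rho) / 2) ^+ k <= eps / (complex.Re b + 1).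
  by apply: expr_lt1_small; [lra | lra | rewrite divr_gt0 // ltr_wpDl].
exists k; apply: mx_norm_le => [|i j]; first exact: ltW.
have r_ge0 : 0 <= (rho + (1 - rho) / 2)%:C by rewrite ler0c; lra.
have := rowsums_le_conj_pow k i j S'S r_ge0 SPS.
have -> : (cplx_mx P ^+ k) i j = ((P ^+ k) i j)%:C by rewrite cplx_mxE -rmorphXn mxE.
rewrite mulrAC -/b bE -!rmorphXn -rmorphM normr_real_complex lecR => /le_trans; apply.
rewrite mulrC; apply: le_trans (ler_wpM2r Reb_ge0 rk) _.
by rewrite mulrAC ler_pdivrMr ?ltr_wpDl // ler_wpM2l ?lerDl // ltW.
Qed.

End SpectralRadius.

(** * The equation A X + B |C X| = F *)

Section AbsValueEquation.
Variables (R : realType) (n : nat).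
Implicit Types (A B C F : 'M[R]_n).

Lemma absmx_eqn_uniq_absmap A B C F : A \in unitmx ->
  (exists! W, absmap (C *m invmx A *m B) (C *m invmx A *m F) W = W) ->
  exists! X, A *m X + B *m absmx (C *m X) = F.
Proof.
move=> A_unit [W [W_fix W_uniq]]; exists (invmx A *m (F - B *m absmx W)); split.
  have -> : C *m (invmx A *m (F - B *m absmx W)) = W.
    by rewrite -{2}W_fix /absmap mulmxA mulmxBr !mulmxA.
  by rewrite mulKVmx // subrK.
move=> X XF.
have CX_fix : absmap (C *m invmx A *m B) (C *m invmx A *m F) (C *m X) = C *m X.
  by rewrite /absmap -XF mulmxDr !mulmxA addrK -(mulmxA C) mulVmx // mulmx1.
by rewrite (W_uniq _ CX_fix) -XF addrK mulKmx.
Qed.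

Lemma absmx_eqn_uniq_spectral A B C F : A \in unitmx ->
  spectral_radius (absmx (C *m invmx A) *m absmx B) < 1 ->
  exists! X, A *m X + B *m absmx (C *m X) = F.
Proof.
move=> A_unit rho_lt1; apply: absmx_eqn_uniq_absmap => //.
apply: absmap_unique_fixpoint_lemx (absmx_mul_le _ _) _ => eps.
exact: spectral_radius_lt1_pow_small.
Qed.

Lemma absmx_eqn_uniq_sqnorm A B C F a : A \in unitmx -> 0 <= a -> a < 1 ->
  (forall v, sqnorm (C *m invmx A *m B *m v) <= a * sqnorm v) ->
  exists! X, A *m X + B *m absmx (C *m X) = F.
Proof.
move=> A_unit a_ge0 a_lt1 Qa; apply: absmx_eqn_uniq_absmap => //.
exact: absmap_unique_fixpoint_sqnorm a_ge0 Qa a_lt1.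
Qed.

Lemma absmx_eqn_uniq_sigma A B C F b : C \in unitmx -> 0 <= b -> b < sigma_min (A *m invmx C) ->
  (forall v, sqnorm (B *m v) <= b ^+ 2 * sqnorm v) ->
  exists! X, A *m X + B *m absmx (C *m X) = F.
Proof.
move=> C_unit b_ge0 b_lt_s Bb.
set M := A *m invmx C in b_lt_s; set s := sigma_min M in b_lt_s.
have s_gt0 : 0 < s := le_lt_trans b_ge0 b_lt_s.
have A_unit : A \in unitmx.
  by rewrite -(mulmxKV C_unit A) unitmx_mul sigma_min_gt0_unitmx.
apply: (absmx_eqn_uniq_sqnorm (a := (b / s) ^+ 2) _ A_unit).
- by rewrite exprn_ge0 ?divr_ge0 ?(ltW s_gt0).
- by rewrite expr_lt1 ?divr_ge0 ?(ltW s_gt0) // ltr_pdivrMr // mul1r.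
move=> v; have MQ : M *m (C *m invmx A *m B *m v) = B *m v.
  by rewrite !mulmxA mulmxKV // mulmxV // mul1mx.
have := sqnorm_mul_ge_sigma_min M (C *m invmx A *m B *m v).
rewrite MQ -/s => /le_trans /(_ (Bb v)) su_le.
by rewrite expr_div_n mulrAC ler_pdivlMr ?exprn_gt0 // mulrC.
Qed.

End AbsValueEquation.

Theorem theorem4p2 (R : realType) (n : nat) (A B C F : 'M[R]_n) :
  [\/ (C \in unitmx) /\ sigma_max (absmx B) < sigma_min (A *m invmx C),
      (C \in unitmx) /\ sigma_max B < sigma_min (A *m invmx C),
      (A \in unitmx) /\ spectral_radius (absmx (C *m invmx A) *m absmx B) < 1
    | (A \in unitmx) /\ sigma_max (C *m invmx A *m B) < 1] ->
  exists! X : 'M[R]_n, A *m X + B *m absmx (C *m X) = F.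
Proof.
case=> [[C_unit sigma_lt]|[C_unit sigma_lt]|[A_unit rho_lt1]|[A_unit sigma_lt1]].
- exact: absmx_eqn_uniq_sigma C_unit (sqrtr_ge0 _) sigma_lt (sqnorm_mul_le_sigma_max_absmx B).
- exact: absmx_eqn_uniq_sigma C_unit (sqrtr_ge0 _) sigma_lt (sqnorm_mul_le_sigma_max B).
- exact: absmx_eqn_uniq_spectral.
- apply: absmx_eqn_uniq_sqnorm A_unit (sqr_ge0 _) _ (sqnorm_mul_le_sigma_max _).
  by rewrite expr_lt1 ?sqrtr_ge0.
Qed.
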